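(* For any parameter $\theta$ of the model $f(\cdot;\theta)$ (indeed for any classifier $f:\mathbb R^{M\times d}\to\mathbb R$), if $\tau\ge\|\boldsymbol\mu\|_2$ then the robust test error satisfies $L_D^{\mathrm{rob}}(\theta)\ge 1/4$.
   Context: Data distribution $D$: fix $\boldsymbol\mu_+,\boldsymbol\mu_-\in\mathbb R^d$ with $\|\boldsymbol\mu_+\|_2=\|\boldsymbol\mu_-\|_2=:\|\boldsymbol\mu\|_2$ and $\langle\boldsymbol\mu_+,\boldsymbol\mu_-\rangle=0$. A sample is $(\mathbf X,y)$ with $\mathbf X=(\mathbf x_1,\dots,\mathbf x_M)^\top\in\mathbb R^{M\times d}$, $y\in\{\pm1\}$ uniform; $\mathbf x_1=\boldsymbol\mu_+$ if $y=1$ and $\mathbf x_1=\boldsymbol\mu_-$ if $y=-1$; $\mathbf x_2,\dots,\mathbf x_M$ are i.i.d. noise vectors $\boldsymbol\xi_i\sim\mathcal N\big(0,\sigma_p^2(\mathbf I-\boldsymbol\mu_+\boldsymbol\mu_+^\top\|\boldsymbol\mu\|_2^{-2}-\boldsymbol\mu_-\boldsymbol\mu_-^\top\|\boldsymbol\mu\|_2^{-2})\big)$. Perturbation set $B(\mathbf X,\tau)=\{\widetilde{\mathbf X}=(\widetilde{\mathbf x}_1,\dots,\widetilde{\mathbf x}_M)^\top:\|\widetilde{\mathbf x}_m-\mathbf x_m\|_2\le\tau\ \forall m\}$. Robust test error $L_D^{\mathrm{rob}}(\theta)=\mathbb E_{(\mathbf X,y)\sim D}\max_{\widetilde{\mathbf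 X}\in B(\mathbf X,\tau)}\mathbb 1(yf(\widetilde{\mathbf X},\theta)\le0)$. *)

From HB Require Import structures.
From mathcomp Require Import all_boot all_order all_algebra.
From mathcomp Require Import all_classical all_reals all_analysis.

Set Implicit Arguments.
Unset Strict Implicit.
Unset Printing Implicit Defensive.

Import Order.TTheory GRing.Theory Num.Theory.

Local Open Scope classical_set_scope.
Local Open Scope ring_scope.

Section defs.
Context {R : realType}.

Definition dotv {d : nat} (u v : 'rV[R]_d) : R := \sum_(j < d) u 0 j * v 0 j.
Definition enorm {d : nat} (v : 'rV[R]_d) : R := Num.sqrt (dotv v v).

Definition in_ball {m d : nat} (tau : R) (X Xt : 'M[R]_(m, d)) : Prop :=
  forall i : 'I_m, enorm (row i Xt - row i X) <= tau.

Definition lab (b : bool) : R := if b then 1 else -1.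

(** The robust 0-1 loss max_{Xt in B(X,tau)} 1(y f(Xt) <= 0) equals 1 exactly
    when this proposition holds. *)
Definition rob_err {m d : nat} (f : 'M[R]_(m, d) -> R) (tau : R)
  (X : 'M[R]_(m, d)) (b : bool) : Prop :=
  exists Xt, in_ball tau X Xt /\ lab b * f Xt <= 0.

(** Borel sigma-algebra on R^{m x d} (generated by the coordinate maps). *)
Definition mx_measurable {m d : nat} (A : set 'M[R]_(m, d)) : Prop :=
  <<s \bigcup_(ij in [set: 'I_m * 'I_d])
        preimage_set_system setT (fun X : 'M[R]_(m, d) => X ij.1 ij.2)
          (@measurable _ R) >> A.

(** Centered 1-d Gaussian law with variance s2 (s2 >= 0);
    variance 0 gives the Dirac mass at 0. *)
Definition gauss_law (s2 : R) (B : set R) : \bar R :=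
  if s2 == 0 then (\1_B 0)%:E else normal_prob 0 (Num.sqrt s2) B.

(** The quadratic form v^T Sigma v of
    Sigma = sp^2 (I - mup mup^T/|mu|^2 - mum mum^T/|mu|^2). *)
Definition noise_var {d : nat} (sp : R) (mup mum v : 'rV[R]_d) : R :=
  sp ^+ 2 * (dotv v v - (dotv v mup) ^+ 2 / (enorm mup) ^+ 2
                      - (dotv v mum) ^+ 2 / (enorm mum) ^+ 2).

(** A random vector xi : Omega -> R^d is N(0, Sigma) (Cramer-Wold definition):
    its coordinates are measurable and every linear functional <v, xi> has law
    N(0, v^T Sigma v). *)
Definition is_noise_vector {d0 : measure_display} {Omega : measurableType d0}
  (P : probability Omega R) {d : nat} (sp : R) (mup mum : 'rV[R]_d)
  (xi : Omega -> 'rV[R]_d) : Prop :=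
  (forall j : 'I_d, measurable_fun setT (fun w => xi w 0 j)) /\
  forall (v : 'rV[R]_d) (B : set R), measurable B ->
    P [set w | dotv v (xi w) \in B] = gauss_law (noise_var sp mup mum v) B.

Definition sigma_vec {d0 : measure_display} {Omega : measurableType d0}
  {d : nat} (xi : Omega -> 'rV[R]_d) : set (set Omega) :=
  <<s \bigcup_(j in [set: 'I_d])
        preimage_set_system setT (fun w => xi w 0 j) (@measurable _ R) >>.

Definition sigma_bool {d0 : measure_display} {Omega : measurableType d0}
  (y : Omega -> bool) : set (set Omega) :=
  [set A | exists S : set bool, A = y @^-1` S].

Definition mutually_independent {d0 : measure_display}
  {Omega : measurableType d0} (P : probability Omega R) {I : finType}
  (F : I -> set (set Omega)) : Prop :=
  forall A : I -> set Omega, (forall i, F i (A i)) ->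
    P (\bigcap_(i in [set: I]) A i) = (\prod_(i : I) P (A i))%E.

(** The sample (X, y): first row mu_y, rows 2..M the noise vectors. *)
Definition sample_X {Omega : Type} {K d : nat} (mup mum : 'rV[R]_d)
  (y : Omega -> bool) (xi : 'I_K -> Omega -> 'rV[R]_d) (w : Omega)
  : 'M[R]_(K.+1, d) :=
  \matrix_(i < K.+1, j < d)
    match unlift ord0 i with
    | Some k => xi k w 0 j
    | None => (if y w then mup else mum) 0 j
    end.

End defs.

From HB Require Import structures.
From mathcomp Require Import all_boot all_order all_algebra.
From mathcomp Require Import all_classical all_reals all_analysis.
From mathcomp Require Import ring lra.
Import Order.TTheory GRing.Theory Num.Theory.
Local Open Scope classical_set_scope.
Local Open Scope ring_scope.

(* Both possible samples sharing a noise realisation (first row mu_+ or mu_-) lie within tau of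
   the matrix whose first row is (mu_+ + mu_-)/2, which is at distance |mu_+ - mu_-|/2 = |mu|/sqrt 2
   from each of them.  Whatever the sign of f at that matrix, one of the two labelled samples is
   robustly misclassified, so the events A_+ and A_- "the sample with label +-1 is robustly
   misclassified" cover the sample space.  They depend on the noise only, hence are independent of
   the label, and the robust error is P(A_+)/2 + P(A_-)/2 >= 1/2. *)

Section euclidean.
Context {R : realType} {d : nat}.
Implicit Types (u v : 'rV[R]_d).

Lemma dotv_ge0 v : 0 <= dotv v v.
Proof. by apply: sumr_ge0 => j _; rewrite -expr2 sqr_ge0. Qed.

Lemma enorm_ge0 v : 0 <= enorm v.
Proof. exact: sqrtr_ge0. Qed.

Lemma enorm_sqr v : enorm v ^+ 2 = dotv v v.
Proof. exact/sqr_sqrtr/dotv_ge0. Qed.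

Lemma enormZ (a : R) v : enorm (a *: v) = `|a| * enorm v.
Proof.
rewrite /enorm -sqrtr_sqr -sqrtrM ?sqr_ge0 //; congr Num.sqrt.
by rewrite /dotv mulr_sumr; apply: eq_bigr => j _; rewrite !mxE; ring.
Qed.

Lemma enormN v : enorm (- v) = enorm v.
Proof. by rewrite -scaleN1r enormZ normrN normr1 mul1r. Qed.

Lemma dotvBB u v : dotv (u - v) (u - v) = dotv u u + dotv v v - 2 * dotv u v.
Proof.
rewrite /dotv mulr_sumr -big_split -sumrB /=.
by apply: eq_bigr => j _; rewrite !mxE; ring.
Qed.

Lemma enormB_orthogonal u v :
  dotv u v = 0 -> enorm u = enorm v -> enorm (u - v) <= 2 * enorm u.
Proof.
move=> uv0 uv; rewrite -ler_sqr ?nnegrE ?mulr_ge0 ?enorm_ge0 //.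
rewrite enorm_sqr dotvBB uv0 -!enorm_sqr -uv exprMn.
by have := sqr_ge0 (enorm u); lra.
Qed.

End euclidean.

Section robust_error.
Context {R : realType} {m d : nat} {f : 'M[R]_(m, d) -> R} {tau : R}.
Implicit Types (X Z : 'M[R]_(m, d)).

Lemma in_ball_midpoint X1 X2 :
  (forall i, enorm (row i X1 - row i X2) <= 2 * tau) ->
  in_ball tau X1 (2^-1 *: (X1 + X2)) /\ in_ball tau X2 (2^-1 *: (X1 + X2)).
Proof.
move=> dist12.
have half_dist i X X' : enorm (row i X - row i X') <= 2 * tau ->
    enorm (row i (2^-1 *: (X + X')) - row i X) <= tau.
  have -> : row i (2^-1 *: (X + X')) - row i X = 2^-1 *: (- (row i X - row i X')).
    by apply/matrixP => a j; rewrite !mxE; field.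
  by rewrite enormZ enormN ger0_norm //; lra.
split=> i; first exact: half_dist.
by rewrite [X1 + X2]addrC; apply: half_dist; rewrite -enormN opprB.
Qed.

Lemma rob_err_true_or_false X1 X2 Z :
  in_ball tau X1 Z -> in_ball tau X2 Z -> rob_err f tau X1 true \/ rob_err f tau X2 false.
Proof.
move=> B1 B2; have [fZ|fZ] := lerP (f Z) 0.
  by left; exists Z; rewrite /lab mul1r.
by right; exists Z; rewrite /lab mulN1r oppr_le0 ltW.
Qed.

End robust_error.

Lemma big_option (T : Type) (idx : T) (op : Monoid.com_law idx) (I : finType)
    (F : option I -> T) :
  \big[op/idx]_(i : option I) F i = op (F None) (\big[op/idx]_(k : I) F (Some k)).
Proof.
rewrite (bigD1 None) //=; congr (op _ _).
rewrite (reindex_omap Some id); last by case.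
by apply: eq_bigl => k /=; rewrite eqxx.
Qed.

Lemma bigcap_option (T : Type) (I : finType) (A : option I -> set T) :
  \bigcap_(i in [set: option I]) A i = A None `&` \bigcap_(k in [set: I]) A (Some k).
Proof.
apply/seteqP; split => x.
  by move=> H; split; [exact: H | move=> k _; exact: H].
by move=> [H0 H] [i|] _ //; exact: H.
Qed.

Section independence.
Context {R : realType} {d0 : measure_display} {Omega : measurableType d0}.
Variable (P : probability Omega R).

Lemma probability_fin {A : set Omega} : measurable A -> P A = (fine (P A))%:E.
Proof. by move=> mA; rewrite fineK // fin_num_measure. Qed.

(* Dynkin's pi-lambda theorem: the events independent of [Y] form a lambda-system. *)
Lemma indep_smallest_sigma (G : set (set Omega)) (Y : set Omega) :
  setI_closed G -> (forall A, G A -> measurable A) -> measurable Y ->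
  (forall A, G A -> P (Y `&` A) = (P Y * P A)%E) ->
  forall A, <<s G>> A -> P (Y `&` A) = (P Y * P A)%E.
Proof.
move=> GI Gm mY indepG.
pose H := [set A | measurable A /\ P (Y `&` A) = (P Y * P A)%E].
suff sGH : <<s G>> `<=` H by move=> A /sGH[].
apply: (@lambda_system_subset _ G GI setT H) => //; last first.
  by move=> A GA; split; [exact: Gm | exact: indepG].
apply/dynkin_lambda_system; split.
- by split => //; rewrite setIT probability_setT mule1.
- move=> A [mA indepA]; split; first exact: measurableC.
  have mYA : measurable (Y `&` A) by exact: measurableI.
  have mYAC : measurable (Y `&` ~` A) by apply: measurableI => //; exact: measurableC.
  have splitY : P Y = (P (Y `&` A) + P (Y `&` ~` A))%E.
    rewrite -measureU //; last by rewrite setIACA setICr setI0.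
    by rewrite -setIUr setUCr setIT.
  move: splitY indepA; rewrite probability_setC //.
  rewrite (probability_fin mY) (probability_fin mA) (probability_fin mYA).
  rewrite (probability_fin mYAC) -EFinD -EFinB -!EFinM => -[splitY] -[indepA].
  by congr (_%:E); rewrite mulrBr mulr1 -indepA; lra.
- move=> F tF HF; split; first by apply: bigcup_measurable => k _; exact: (HF k).1.
  rewrite setI_bigcupr measure_bigcup //; last 2 first.
  + by move=> i _; apply: measurableI => //; exact: (HF i).1.
  + exact: trivIset_setIl.
  rewrite measure_bigcup //; last by move=> i _; exact: (HF i).1.
  rewrite (probability_fin mY) -nneseriesZl //; apply: eq_eseriesr => n _.
  by rewrite -probability_fin //; exact: (HF n).2.
Qed.

Lemma half_label_split (Y A1 A0 : set Omega) :
  measurable Y -> P Y = (2^-1)%:E -> measurable A1 -> measurable A0 ->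
  A1 `|` A0 = setT ->
  P (Y `&` A1) = (P Y * P A1)%E -> P (~` Y `&` A0) = (P (~` Y) * P A0)%E ->
  ((2^-1)%:E <= P ((Y `&` A1) `|` (~` Y `&` A0)))%E.
Proof.
move=> mY PY mA1 mA0 cover indep1 indep0.
have mYC : measurable (~` Y) by exact: measurableC.
have -> : P ((Y `&` A1) `|` (~` Y `&` A0)) = (P (Y `&` A1) + P (~` Y `&` A0))%E.
  rewrite measureU //; [exact: measurableI | exact: measurableI |].
  by rewrite setIACA setICr set0I.
have PYC : P (~` Y) = (2^-1)%:E.
  by rewrite probability_setC // PY -EFinB; congr (_%:E); field.
have one_le : (1 <= P A1 + P A0)%E.
  by rewrite -(probability_setT P) -cover; exact: measureU2.
move: one_le; rewrite indep1 indep0 PY PYC.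
rewrite (probability_fin mA1) (probability_fin mA0) -!EFinM -!EFinD !lee_fin.
lra.
Qed.

End independence.

Section sample.
Context {R : realType} {K d : nat} {mup mum : 'rV[R]_d}.

Lemma sample_X_label_const {Omega : Type} (y : Omega -> bool)
    (xi : 'I_K -> Omega -> 'rV[R]_d) w :
  sample_X mup mum y xi w = sample_X mup mum (fun=> y w) xi w.
Proof. by apply/matrixP => i j; rewrite !mxE. Qed.

Lemma sample_X_row_dist {Omega : Type} (xi : 'I_K -> Omega -> 'rV[R]_d) w i :
  enorm (row i (sample_X mup mum (fun=> true) xi w)
         - row i (sample_X mup mum (fun=> false) xi w)) <= enorm (mup - mum).
Proof.
case: (unliftP ord0 i) => [k ->|->].
  rewrite (_ : _ - _ = 0 *: (mup - mum)) ?enormZ ?normr0 ?mul0r ?enorm_ge0 //.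
  by apply/matrixP => a j; rewrite !mxE liftK subrr mul0r.
by rewrite (_ : _ - _ = mup - mum) //; apply/matrixP => a j; rewrite !mxE unlift_none ord1.
Qed.

Lemma rob_err_sample_true_or_false {Omega : Type} (xi : 'I_K -> Omega -> 'rV[R]_d)
    (f : 'M[R]_(K.+1, d) -> R) (tau : R) w :
  enorm mup = enorm mum -> dotv mup mum = 0 -> enorm mup <= tau ->
  rob_err f tau (sample_X mup mum (fun=> true) xi w) true \/
  rob_err f tau (sample_X mup mum (fun=> false) xi w) false.
Proof.
move=> norm_eq orth mu_le.
have dist i : enorm (row i (sample_X mup mum (fun=> true) xi w)
                     - row i (sample_X mup mum (fun=> false) xi w)) <= 2 * tau.
  apply: le_trans (sample_X_row_dist xi w i) _.
  by apply: le_trans (enormB_orthogonal _ _ orth norm_eq) _; rewrite ler_pM2l.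
have [ball_true ball_false] := in_ball_midpoint _ _ dist.
exact: rob_err_true_or_false _ _ _ ball_true ball_false.
Qed.

Lemma rob_err_sample_setE {Omega : Type} (y : Omega -> bool)
    (xi : 'I_K -> Omega -> 'rV[R]_d) (f : 'M[R]_(K.+1, d) -> R) (tau : R) :
  [set w | rob_err f tau (sample_X mup mum y xi w) (y w)] =
  (y @^-1` [set true] `&` [set w | rob_err f tau (sample_X mup mum (fun=> true) xi w) true])
  `|` (~` (y @^-1` [set true])
       `&` [set w | rob_err f tau (sample_X mup mum (fun=> false) xi w) false]).
Proof.
apply/seteqP; split => w; rewrite /= (sample_X_label_const y).
- by case: (y w) => Aw; [left | right].
- by case: (y w); case=> -[].
Qed.

End sample.

Section noise_sigma.
Context {R : realType} {d0 : measure_display} {Omega : measurableType d0} {K d : nat}.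
Context {xi : 'I_K -> Omega -> 'rV[R]_d}.
Hypothesis xi_measurable : forall k j, measurable_fun setT (fun w => xi k w 0 j).

Definition noise_events : set (set Omega) :=
  [set A | exists B : 'I_K -> set Omega,
     (forall k, sigma_vec (xi k) (B k)) /\ A = \bigcap_(k in [set: 'I_K]) B k].

Lemma sigma_vec_measurable k A : sigma_vec (xi k) A -> measurable A.
Proof.
apply: smallest_sub; first exact: sigma_algebra_measurable.
by move=> _ [j _ [B mB <-]]; exact: xi_measurable.
Qed.

Lemma noise_events_measurable A : noise_events A -> measurable A.
Proof.
move=> [B [sB ->]]; apply: fin_bigcap_measurable; first exact: finite_finset.
by move=> k _; exact: sigma_vec_measurable (sB k).
Qed.

Lemma noise_events_setI_closed : setI_closed noise_events.
Proof.
move=> _ _ [B [sB ->]] [C [sC ->]]; exists (fun k => B k `&` C k); split.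
  by move=> k; apply: (@measurableI _ (g_sigma_algebraType _)); [exact: sB | exact: sC].
by rewrite bigcapI.
Qed.

Lemma noise_events_coord k j B :
  measurable B -> noise_events ((fun w => xi k w 0 j) @^-1` B).
Proof.
move=> mB; exists (fun k' => if k' == k then (fun w => xi k w 0 j) @^-1` B
                            else setT); split.
  move=> k'; case: eqP => [->|_]; last exact: (@measurableT _ (g_sigma_algebraType _)).
  by apply: sub_sigma_algebra; exists j => //; exists B; rewrite ?setTI.
apply/seteqP; split => w.
  by move=> Bw k' _; case: eqP.
by move/(_ k I); rewrite eqxx.
Qed.

Lemma sample_X_preimage_noise_sigma (mup mum : 'rV[R]_d) (b : bool)
    (S : set 'M[R]_(K.+1, d)) :
  mx_measurable S ->
  <<s noise_events>> ((fun w => sample_X mup mum (fun=> b) xi w) @^-1` S).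
Proof.
set Xb := fun w => _; move=> mS.
suff : image_set_system setT Xb <<s noise_events>> S.
  by rewrite /image_set_system /= setTI.
move: S mS; apply: smallest_sub; first exact: sigma_algebra_image.
move=> _ [[i j] _ [B mB <-]]; rewrite /image_set_system /= !setTI.
case: (unliftP ord0 i) => [k ->|->] /=.
  apply: sub_sigma_algebra.
  rewrite (_ : _ @^-1` _ = (fun w => xi k w 0 j) @^-1` B); first exact: noise_events_coord.
  by apply/seteqP; split => w; rewrite /= /Xb /sample_X mxE liftK.
have [Bb|nBb] := pselect (B ((if b then mup else mum) 0 j)).
  rewrite (_ : _ @^-1` _ = setT); first exact: (@measurableT _ (g_sigma_algebraType _)).
  by apply/seteqP; split => w //= _; rewrite /Xb /sample_X mxE unlift_none.
rewrite (_ : _ @^-1` _ = set0); first exact: (@measurable0 _ (g_sigma_algebraType _)).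
by apply/seteqP; split => w //=; rewrite /Xb /sample_X mxE unlift_none.
Qed.

Lemma noise_sigma_measurable A : <<s noise_events>> A -> measurable A.
Proof.
apply: smallest_sub; first exact: sigma_algebra_measurable.
exact: noise_events_measurable.
Qed.

Variables (P : probability Omega R) (y : Omega -> bool).
Hypothesis label_noise_indep : mutually_independent P
  (fun o : option 'I_K => match o with None => sigma_bool y | Some k => sigma_vec (xi k) end).

Lemma label_indep_noise_sigma S : measurable (y @^-1` S) ->
  forall A, <<s noise_events>> A -> P (y @^-1` S `&` A) = (P (y @^-1` S) * P A)%E.
Proof.
move=> mS; apply: indep_smallest_sigma => //.
- exact: noise_events_setI_closed.
- exact: noise_events_measurable.
move=> _ [B [sB ->]].
have indep_S := label_noise_indep (fun o => if o is Some k then B k else y @^-1` S).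
have indep_T := label_noise_indep (fun o => if o is Some k then B k else setT).
rewrite !bigcap_option !big_option /= in indep_S indep_T.
rewrite setTI probability_setT mul1e in indep_T.
rewrite indep_S; last by case=> [k|] //=; exists S.
by rewrite indep_T //; case=> [k|] //=; exists setT; rewrite preimage_setT.
Qed.

End noise_sigma.

Arguments noise_events {R d0 Omega K d} xi.

Theorem mainTheorem2 (R : realType) (K d : nat) (mup mum : 'rV[R]_d)
  (sp tau : R)
  (d0 : measure_display) (Omega : measurableType d0) (P : probability Omega R)
  (y : Omega -> bool) (xi : 'I_K -> Omega -> 'rV[R]_d)
  (f : 'M[R]_(K.+1, d) -> R) :
  enorm mup = enorm mum ->
  dotv mup mum = 0 ->
  (* y uniform on {+1,-1} *)
  measurable (y @^-1` [set true]) ->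
  P (y @^-1` [set true]) = (2^-1)%:E ->
  (* each noise vector is N(0, sp^2 (I - mup mup^T/|mu|^2 - mum mum^T/|mu|^2)) *)
  (forall k, is_noise_vector P sp mup mum (xi k)) ->
  (* y, xi_2, ..., xi_M are mutually independent *)
  mutually_independent P
    (fun o : option 'I_K =>
       match o with None => sigma_bool y | Some k => sigma_vec (xi k) end) ->
  (* the robust loss is a measurable function of the data (X, y) *)
  (forall b : bool, mx_measurable [set X | rob_err f tau X b]) ->
  enorm mup <= tau ->
  (\int[P]_w (\1_[set w | rob_err f tau (sample_X mup mum y xi w) (y w)] w)%:E
     >= (4^-1)%:E)%E.
Proof.
move=> norm_eq orth mY PY noise indep rob_meas mu_le.
have xi_meas k j : measurable_fun setT (fun w => xi k w 0 j) := (noise k).1 j.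
pose Y := y @^-1` [set true].
pose A b := [set w | rob_err f tau (sample_X mup mum (fun=> b) xi w) b].
have A_noise b : <<s noise_events xi>> (A b).
  exact: sample_X_preimage_noise_sigma (rob_meas b).
have mA b : measurable (A b) by apply: (noise_sigma_measurable xi_meas); exact: A_noise.
have cover : A true `|` A false = setT.
  apply/seteqP; split => // w _.
  by case: (rob_err_sample_true_or_false xi f tau w norm_eq orth mu_le); [left|right].
rewrite rob_err_sample_setE -/Y -/(A true) -/(A false).
rewrite integral_indic //= ?setIT; last first.
  by apply: measurableU; apply: measurableI => //; exact: measurableC.
have half : ((2^-1)%:E <= P ((Y `&` A true) `|` (~` Y `&` A false)))%E.
  apply: half_label_split => //.
  - exact: label_indep_noise_sigma.
  - rewrite /Y preimage_setC; apply: label_indep_noise_sigma => //.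
    by rewrite -preimage_setC; exact: measurableC.
by apply: le_trans half; rewrite lee_fin lef_pV2 ?posrE // ler_nat.
Qed.
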